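(* Let $\mathbf M=(M,N)$ be a flag matroid of rank $(1,n-1)$ on $[n]$, and let $P_{\mathbf M}$ denote its polytope translated by $-(1,\dots,1)$. Then every subdivision of $P_{\mathbf M}$ induced by a valuated flag matroid with support $\mathbf M$ is induced by a hyperplane arrangement consisting of hyperplanes of the form $\{x\in\mathbb{R}^n:x_i=0\}$, i.e. there is a set $I\subseteq[n]$ such that the cells of the subdivision are exactly the nonempty sets of the form $P_{\mathbf M}\cap\bigcap_{i\in I}H_i$ with each $H_i$ one of $\{x_i\ge0\}$, $\{x_i\le0\}$, $\{x_i=0\}$.
   Context: A flag matroid $(M,N)$ of rank $(1,n-1)$ consists of a matroid $M$ of rank 1 and a matroid $N$ of rank $n-1$ on $[n]$ such that every flat of $M$ is a flat of $N$. Its polytope is $\operatorname{conv}\{e_i:\{i\}\text{ basis of }M\}+\operatorname{conv}\{e_B:B\text{ basis of }N\}$, where $e_B=\sum_{i\in B}e_i$; after translation by $-(1,\dots,1)$ its vertices have one coordinate $-1$, one coordinate $+1$, the rest $0$. A valuated flag matroid with support $\mathbf M$ is a pair $(\mu,\nu)$, $\mu:\binom{[n]}{1}\to\mathbb{R}\cup\{\infty\}$, $\nu:\binom{[n]}{n-1}\to\mathbb{R}\cup\{\infty\}$, finite exactly on the bases of $M$ resp. $N$, such that the minimum of $\mu(\{i\})+\nu([n]\setminus\{i\})$ over $i\in[n]$ is attained at least twice or is $\infty$. The subdivision it induces is the regular mixed subdivision whose cells are, for $x\in\mathbb{R}^n$, $\operatorname{conv}\{e_i:i\text{ minimizes }\mu(\{i\})-x_i\}+\operatorname{conv}\{e_B:B\text{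 minimizes }\nu(B)-x\cdot e_B\}$ (translated by $-(1,\dots,1)$). *)

From HB Require Import structures.
From mathcomp Require Import all_boot all_order all_algebra.
From mathcomp Require Import reals.
Set Implicit Arguments. Unset Strict Implicit. Unset Printing Implicit Defensive.
Import Order.TTheory GRing.Theory Num.Theory.
Local Open Scope ring_scope.

Section Matroids.
Variable n : nat.

Definition is_matroid (B : {set {set 'I_n}}) : Prop :=
  B != set0 /\
  forall B1 B2, B1 \in B -> B2 \in B -> forall x, x \in B1 :\: B2 ->
    exists2 y, y \in B2 :\: B1 & (y |: (B1 :\ x)) \in B.

Definition has_rank (B : {set {set 'I_n}}) (r : nat) : Prop :=
  forall X, X \in B -> #|X| = r.

Definition mrank (B : {set {set 'I_n}}) (A : {set 'I_n}) : nat :=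
  (\max_(X in B) #|A :&: X|)%N.

Definition is_flat (B : {set {set 'I_n}}) (F : {set 'I_n}) : Prop :=
  forall x, x \notin F -> (mrank B F < mrank B (x |: F))%N.

Definition flag_matroid (M N : {set {set 'I_n}}) : Prop :=
  [/\ is_matroid M, is_matroid N & forall F, is_flat M F -> is_flat N F].
End Matroids.

(* ---------- R cup {oo}, encoded as option R (None = oo) ---------- *)
Section Trop.
Variable R : numDomainType.

Definition ole (a b : option R) : bool :=
  match a, b with
  | _, None => true
  | None, Some _ => false
  | Some u, Some v => u <= v
  end.

Definition oadd (a b : option R) : option R :=
  match a, b with Some u, Some v => Some (u + v) | _, _ => None end.

Definition is_argmin (I : Type) (D : I -> Prop) (f : I -> option R) (a : I) : Prop :=
  D a /\ forall b, D b -> ole (f a) (f b).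
End Trop.

(* mu({i}) is written mu i; nu is defined on subsets, only (n-1)-subsets matter *)
Definition valuated_flag (R : numDomainType) (n : nat) (M N : {set {set 'I_n}})
    (mu : 'I_n -> option R) (nu : {set 'I_n} -> option R) : Prop :=
  [/\ (forall i, mu i <> None <-> [set i] \in M),
      (forall B : {set 'I_n}, #|B| = n.-1 -> (nu B <> None <-> B \in N)) &
      let s := fun i => oadd (mu i) (nu (~: [set i])) in
      (forall i, s i = None) \/
      exists i j, [/\ i != j, is_argmin (fun _ => True) s i
                            & is_argmin (fun _ => True) s j]].

Section Geometry.
Variables (R : realType) (n : nat).

Definition pset := ('I_n -> R) -> Prop.

Definition conv (I : finType) (A : I -> Prop) (f : I -> 'I_n -> R) : pset :=
  fun p => exists l : I -> R,
    [/\ forall k, 0 <= l k, forall k, ~ A k -> l k = 0,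
        \sum_k l k = 1 & forall t, p t = \sum_k l k * f k t].

Definition msum (X Y : pset) : pset :=
  fun p => exists u v, [/\ X u, Y v & forall t, p t = u t + v t].

Definition shift_m1 (X : pset) : pset := fun p => X (fun t => p t + 1).

Definition unitv (i : 'I_n) : 'I_n -> R := fun t => (t == i)%:R.
Definition setv (B : {set 'I_n}) : 'I_n -> R := fun t => (t \in B)%:R.
Definition dotv (x y : 'I_n -> R) : R := \sum_t x t * y t.

Definition flag_polytope (M N : {set {set 'I_n}}) : pset :=
  shift_m1 (msum (conv (fun i => [set i] \in M) unitv)
                 (conv (fun B => B \in N) setv)).

(* the cell of the induced regular mixed subdivision attached to x *)
Definition cell (mu : 'I_n -> option R) (nu : {set 'I_n} -> option R)
    (x : 'I_n -> R) : pset :=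
  shift_m1 (msum
    (conv (is_argmin (fun _ => True) (fun i => omap (fun u => u - x i) (mu i)))
          unitv)
    (conv (is_argmin (fun B : {set 'I_n} => #|B| = n.-1)
                     (fun B => omap (fun u => u - dotv x (setv B)) (nu B)))
          setv)).

Definition face (P F : pset) : Prop :=
  exists w : 'I_n -> R,
    F = fun p => P p /\ forall q, P q -> dotv w q <= dotv w p.
End Geometry.

Inductive hside := Hge | Hle | Heq.

Definition halfspace (R : realType) (n : nat) (s : hside) (i : 'I_n)
    (p : 'I_n -> R) : Prop :=
  match s with
  | Hge => 0 <= p i
  | Hle => p i <= 0
  | Heq => p i = 0
  end.

From HB Require Import structures.
From mathcomp Require Import all_boot all_order all_algebra.
From mathcomp Require Import reals.
From mathcomp Require Import ring lra.
Set Implicit Arguments. Unset Strict Implicit. Unset Printing Implicit Defensive.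
Import Order.TTheory GRing.Theory Num.Theory.
Local Open Scope ring_scope.

(* Let S index the finite values of mu and T those of nu on the complements
   [n] - j.  Translated by -(1,...,1), the polytope is Delta_S - Delta_T, a
   difference of two coordinate simplices, and the cell of x is
   Delta_A - Delta_C with A = argmin_S (mu_i - x_i), C = argmin_T (nu_j + x_j).
   Faces are Delta_A' - Delta_C', where A' and C' are the maximisers and
   minimisers over S and T of a linear functional; hence A' :&: C' is empty or
   all of U = S :&: T.  For cells A :&: C is empty or the set W of minimisers of
   mu_i + nu([n] - i) over U, and every such pair (A, C) is realised by some x.
   Imposing signs on the coordinates of I = U :\: W removes coordinates of I
   from A' and from C', and this turns face pairs into exactly the cell pairs. *)

Section ArgminIn.
Variables (R : realDomainType) (T : finType).
Implicit Types (A B : {set T}) (f : T -> R).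

Definition argmin_in A f := [set i in A | [forall k in A, f i <= f k]].

Lemma argmin_in_sub A f : argmin_in A f \subset A.
Proof. by apply/subsetP => i; rewrite inE => /andP[]. Qed.

Lemma argmin_inP A f i :
  reflect (i \in A /\ forall k, k \in A -> f i <= f k) (i \in argmin_in A f).
Proof. by rewrite inE; apply: (iffP andP) => -[iA /forall_inP]. Qed.

Lemma argmin_in_nonempty A f : (exists i, i \in A) -> exists i, i \in argmin_in A f.
Proof.
case=> i0 i0A; case: (arg_minP f i0A) => i iA imin.
by exists i; apply/argmin_inP.
Qed.

Lemma argmin_in_le A f k i :
  k \in argmin_in A f -> i \in A -> f i <= f k -> i \in argmin_in A f.
Proof.
by case/argmin_inP=> _ kmin iA ik; apply/argmin_inP; split=> // j /kmin; apply: le_trans.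
Qed.

Lemma argmin_in_level A f i :
  i \in argmin_in A f -> argmin_in A f = [set k in A | f k == f i].
Proof.
case/argmin_inP=> iA imin; apply/setP => k; rewrite !inE.
case: (boolP (k \in A)) => //= kA; apply/forall_inP/eqP => [kmin|->//].
by apply/eqP; rewrite eq_le kmin ?imin.
Qed.

Lemma argmin_in_eq A B f m : (exists b, b \in B) -> B \subset A ->
  (forall i, i \in B -> f i = m) -> (forall i, i \in A -> i \notin B -> m < f i) ->
  argmin_in A f = B.
Proof.
move=> [b bB] /subsetP sBA fB fA; apply/setP => i; apply/argmin_inP/idP.
  case=> iA /(_ b (sBA b bB)); rewrite (fB b bB); apply: contraTT => iB.
  by rewrite -ltNge fA.
move=> iB; split=> [|k kA]; first exact: sBA.
rewrite fB //; have [kB|kB] := boolP (k \in B); first by rewrite fB.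
exact/ltW/fA.
Qed.

Lemma argmin_in_addr A f c : argmin_in A (fun i => f i + c) = argmin_in A f.
Proof. by apply/setP => i; rewrite !inE; under eq_forallb do rewrite lerD2r. Qed.

End ArgminIn.

Lemma sum_delta (R : nzSemiRingType) (T : finType) (F : T -> R) k :
  \sum_i (i == k)%:R * F i = F k.
Proof. by rewrite (bigD1 k) //= eqxx mul1r big1 ?addr0 // => i /negPf->; rewrite mul0r. Qed.

Section ProbabilityVectors.
Variables (R : realDomainType) (T : finType).
Implicit Types (A B : {set T}) (a d f : T -> R).

Definition prob_on A a :=
  [/\ forall i, 0 <= a i, forall i, i \notin A -> a i = 0 & \sum_i a i = 1].

Lemma prob_on_nonempty A a : prob_on A a -> exists i, i \in A.
Proof.
case=> _ aA a1; apply/existsP; apply: contraT; rewrite negb_exists => /forallP Aempty.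
by move: a1; rewrite big1 => [/eqP|i _]; [rewrite eq_sym oner_eq0|exact/aA/Aempty].
Qed.

Lemma prob_on_delta A i : i \in A -> prob_on A (fun t => (t == i)%:R).
Proof.
move=> iA; split=> [t|t|]; first by rewrite ler0n.
  by apply: contraNeq; rewrite pnatr_eq0 eqb0 negbK => /eqP->.
by rewrite -[RHS](sum_delta (fun=> 1) i); apply: eq_bigr => k _; rewrite mulr1.
Qed.

Lemma prob_on_sub A B a : A \subset B -> prob_on A a -> prob_on B a.
Proof. by move=> /subsetP sAB [a0 aA a1]; split=> // i iB; apply/aA/(contra (sAB i)). Qed.

Lemma prob_on_ge A a f m : prob_on A a -> (forall i, i \in A -> m <= f i) ->
  m <= \sum_i f i * a i.
Proof.
case=> a0 aA a1 fA; rewrite -[m]mulr1 -a1 mulr_sumr; apply: ler_sum => i _.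
by have [iA|/aA->] := boolP (i \in A); [rewrite ler_wpM2r ?fA|rewrite !mulr0].
Qed.

Lemma prob_on_argmin A a f i0 : prob_on A a -> i0 \in argmin_in A f ->
  \sum_i f i * a i = f i0 <-> prob_on (argmin_in A f) a.
Proof.
move=> aA i0min; have /argmin_inP[i0A i0le] := i0min.
rewrite (argmin_in_level i0min); split=> [sum_f|].
  have [a0 a_out a1] := aA; split=> // i; rewrite inE negb_and.
  have gap0 : \sum_i (f i - f i0) * a i = 0.
    under eq_bigr do rewrite mulrBl.
    by rewrite sumrB -mulr_sumr a1 mulr1 sum_f subrr.
  have gap_ge0 k : true -> 0 <= (f k - f i0) * a k.
    have [kA|/a_out->] := boolP (k \in A); last by rewrite mulr0.
    by rewrite mulr_ge0 // subr_ge0 i0le.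
  case/orP=> [/a_out //|fi]; apply/eqP; apply: contraTT fi => ai0.
  move: (psumr_eq0P gap_ge0 gap0) => /(_ i isT) /eqP.
  by rewrite mulf_eq0 (negPf ai0) orbF subr_eq0 negbK.
case=> _ a_out a1; rewrite -[f i0]mulr1 -a1 mulr_sumr; apply: eq_bigr => i _.
have [|i_out] := boolP (i \in [set k in A | f k == f i0]).
  by rewrite inE => /andP[_ /eqP->].
by rewrite a_out ?mulr0.
Qed.

Lemma prob_on_transfer A a d k : prob_on A a -> k \in A ->
  (forall i, 0 <= d i <= a i) -> d k = 0 ->
  prob_on A (fun i => a i - d i + (i == k)%:R * \sum_j d j).
Proof.
move=> [a0 aA a1] kA da dk0; have d0 i : 0 <= d i by case/andP: (da i).
split=> [i|i iA|].
- have [->|ik] := eqVneq i k; first by rewrite dk0 subr0 mul1r addr_ge0 ?sumr_ge0.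
  by rewrite mul0r addr0 subr_ge0; case/andP: (da i).
- have ik : i != k by apply: contraNneq iA => ->.
  have di0 : d i = 0 by apply/eqP; rewrite eq_le andbC; move: (da i); rewrite aA.
  by rewrite aA // di0 (negPf ik) mul0r !addr0 subr0.
- by rewrite big_split sumrB /= a1 sum_delta subrK.
Qed.

End ProbabilityVectors.

Definition forces_nonpos (s : hside) : bool := if s is Hge then false else true.
Definition forces_nonneg (s : hside) : bool := if s is Hle then false else true.

Section DifferenceOfSimplices.
Variables (R : realType) (n : nat).
Implicit Types (A C E I : {set 'I_n}) (p : 'I_n -> R).

Definition dsimplex A C : pset R n := fun p =>
  exists a c, [/\ prob_on A a, prob_on C c & forall t, p t = a t - c t].

Lemma dsimplex_nonempty A C p :
  dsimplex A C p -> (exists i, i \in A) /\ (exists j, j \in C).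
Proof. by case=> a [c [/prob_on_nonempty ? /prob_on_nonempty ? _]]. Qed.

Lemma dsimplex_delta A C i j : i \in A -> j \in C ->
  dsimplex A C (fun t => (t == i)%:R - (t == j)%:R).
Proof.
by move=> iA jC; do 2 eexists; split; [exact: prob_on_delta iA|exact: prob_on_delta jC|].
Qed.

Lemma setv_setC1 (j t : 'I_n) : setv R (~:[set j]) t = 1 - (t == j)%:R.
Proof. by rewrite /setv in_setC1; case: eqP; rewrite ?subr0 ?subrr. Qed.

Lemma sum_setv_setC1 (c : 'I_n -> R) t :
  \sum_j c j * setv R (~:[set j]) t = \sum_j c j - c t.
Proof.
under eq_bigr do rewrite setv_setC1 mulrBr mulr1 mulrC eq_sym.
by rewrite sumrB sum_delta.
Qed.

Lemma conv_unitv (P : 'I_n -> Prop) A : (forall i, P i <-> i \in A) ->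
  forall u, conv P (@unitv R n) u <-> prob_on A u.
Proof.
move=> PA u; have unit_sum (l : 'I_n -> R) t : \sum_k l k * unitv R k t = l t.
  by rewrite -[RHS](sum_delta l t); apply: eq_bigr => k _; rewrite mulrC eq_sym.
split=> [[l [l0 lP l1 lu]]|[u0 uA u1]].
  have -> : u = l by apply: boolp.funext => t; rewrite lu unit_sum.
  by split=> // i /negP iA; apply: lP => /PA.
by exists u; split=> // i Pi; apply: uA; apply/negP => /PA.
Qed.

Lemma sum_over_setC1 (l F : {set 'I_n} -> R) :
  (forall B, l B != 0 -> exists j, B = ~:[set j]) ->
  \sum_B l B * F B = \sum_j l (~:[set j]) * F (~:[set j]).
Proof.
move=> l_supp; have setC1_inj : injective (fun j : 'I_n => ~:[set j]).
  by move=> i j /setC_inj /set1_inj.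
rewrite (bigID (mem [set ~:[set j] | j : 'I_n])) /= [X in _ + X]big1 ?addr0.
  by rewrite (big_imset (fun B => l B * F B)) //=; apply: in2W.
move=> B /imsetP B_out; have [->|/l_supp [j eB]] := eqVneq (l B) 0; first by rewrite mul0r.
by case: B_out; exists j.
Qed.

Lemma conv_setv_setC1 (P : {set 'I_n} -> Prop) C :
  (forall B, P B -> exists j, B = ~:[set j]) -> (forall j, P (~:[set j]) <-> j \in C) ->
  forall v, conv P (@setv R n) v <-> exists2 c, prob_on C c & forall t, v t = 1 - c t.
Proof.
move=> P_setC1 PC v.
have sum_setC1 (l : {set 'I_n} -> R) : (forall B, l B != 0 -> exists j, B = ~:[set j]) ->
    \sum_B l B = \sum_j l (~:[set j]).
  move=> l_supp; transitivity (\sum_B l B * 1); first by apply: eq_bigr => B _; rewrite mulr1.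
  by rewrite sum_over_setC1 //; apply: eq_bigr => j _; rewrite mulr1.
split=> [[l [l0 lP l1 lv]]|[c [c0 cC c1] vc]].
  have l_supp B : l B != 0 -> exists j, B = ~:[set j].
    move=> lB; apply: P_setC1; apply: boolp.contrapT => nPB.
    by move: lB; rewrite lP ?eqxx.
  exists (fun j => l (~:[set j])) => [|t].
    by split=> // [j /negP jC|]; [apply: lP => /PC|rewrite -sum_setC1].
  by rewrite lv sum_over_setC1 // sum_setv_setC1 -sum_setC1 // l1.
pose l B := \sum_(j | B == ~:[set j]) c j.
have l_setC1 j : l (~:[set j]) = c j.
  rewrite /l (big_pred1 j) // => k.
  by rewrite (inj_eq (@setC_inj _)) (inj_eq (@set1_inj _)) eq_sym.
have l_supp B : l B != 0 -> exists j, B = ~:[set j].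
  case: (pickP (fun j => B == ~:[set j])) => [j /eqP ->|none]; first by exists j.
  by rewrite /l big_pred0 ?eqxx.
exists l; split.
- by move=> B; apply: sumr_ge0.
- move=> B nPB; apply: big1 => j /eqP eB; apply: cC; apply/negP => /PC.
  by rewrite -eB.
- by rewrite sum_setC1 //; under eq_bigr do rewrite l_setC1.
- move=> t; rewrite vc sum_over_setC1 //; under eq_bigr do rewrite l_setC1.
  by rewrite sum_setv_setC1 c1.
Qed.

Lemma shift_msum_conv (P : 'I_n -> Prop) (Q : {set 'I_n} -> Prop) A C :
  (forall i, P i <-> i \in A) -> (forall B, Q B -> exists j, B = ~:[set j]) ->
  (forall j, Q (~:[set j]) <-> j \in C) ->
  shift_m1 (msum (conv P (@unitv R n)) (conv Q (@setv R n))) = dsimplex A C.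
Proof.
move=> PA Q_setC1 QC; apply/boolp.predeqP => p; split.
  case=> u [v [/(conv_unitv PA) uA /(conv_setv_setC1 Q_setC1 QC) [c cC vc] puv]].
  by exists u, c; split=> // t; have := puv t; rewrite vc; lra.
case=> a [c [aA cC pac]]; exists a, (fun t => 1 - c t); split.
- exact/(conv_unitv PA).
- by apply/(conv_setv_setC1 Q_setC1 QC); exists c.
- by move=> t; rewrite pac; ring.
Qed.

Lemma dotv_dsimplex (w : 'I_n -> R) a c p : (forall t, p t = a t - c t) ->
  dotv w p = - (\sum_i - w i * a i) - \sum_i w i * c i.
Proof.
move=> pac; rewrite /dotv -sumrN -sumrB; apply: eq_bigr => t _.
by rewrite pac mulNr opprK mulrBr.
Qed.

Lemma dsimplex_face A C (w : 'I_n -> R) : (exists i, i \in A) -> (exists j, j \in C) ->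
  (fun p => dsimplex A C p /\ forall q, dsimplex A C q -> dotv w q <= dotv w p)
  = dsimplex (argmin_in A (fun i => - w i)) (argmin_in C w).
Proof.
move=> /(argmin_in_nonempty (fun i => - w i)) [i0 i0min].
move=> /(argmin_in_nonempty w) [j0 j0min].
have /argmin_inP [i0A i0le] := i0min; have /argmin_inP [j0C j0le] := j0min.
have dot_le q : dsimplex A C q -> dotv w q <= w i0 - w j0.
  case=> a [c [aA cC qac]]; rewrite (dotv_dsimplex w qac).
  have := prob_on_ge aA i0le; have := prob_on_ge cC j0le; lra.
have dot_eq a c p : prob_on (argmin_in A (fun i => - w i)) a ->
    prob_on (argmin_in C w) c -> (forall t, p t = a t - c t) -> dotv w p = w i0 - w j0.
  move=> aA cC pac; rewrite (dotv_dsimplex w pac).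
  have aA' := prob_on_sub (argmin_in_sub A _) aA.
  have cC' := prob_on_sub (argmin_in_sub C w) cC.
  by rewrite ((prob_on_argmin aA' i0min).2 aA) ((prob_on_argmin cC' j0min).2 cC) opprK.
apply/boolp.predeqP => p; split=> [[[a [c [aA cC pac]]] pmax]|].
  have := pmax _ (dsimplex_delta i0A j0C).
  rewrite (dot_eq _ _ _ (prob_on_delta R i0min) (prob_on_delta R j0min)) //.
  rewrite (dotv_dsimplex w pac) => dot_ge.
  have := prob_on_ge aA i0le; have := prob_on_ge cC j0le => c_ge a_ge.
  exists a, c; split=> //.
    by apply/(prob_on_argmin aA i0min); lra.
  by apply/(prob_on_argmin cC j0min); lra.
case=> a [c [aA cC pac]]; split.
  exists a, c; split=> //; first exact: prob_on_sub (argmin_in_sub _ _) aA.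
  exact: prob_on_sub (argmin_in_sub _ _) cC.
by move=> q /dot_le; rewrite (dot_eq a c p aA cC pac).
Qed.

(* The mass min (a i) (c i), i in E, is moved to a coordinate k outside E that
   both simplices share; this does not change a - c. *)
Lemma dsimplex_separated A C E p :
  (A :&: C = set0 \/ exists2 k, k \in A :&: C & k \notin E) -> dsimplex A C p ->
  exists a c, [/\ prob_on A a, prob_on C c, forall t, p t = a t - c t
                & forall i, i \in E -> a i = 0 \/ c i = 0].
Proof.
move=> hAC [a [c [aA cC pac]]]; case: hAC => [AC0|[k /setIP[kA kC] kE]].
  exists a, c; split=> // i _; have : i \notin A :&: C by rewrite AC0 inE.
  by rewrite inE negb_and => /orP[iA|iC]; [left; case: aA|right; case: cC] => _ ->.
have [[a0 _ _] [c0 _ _]] := (aA, cC).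
pose d i := if i \in E then Num.min (a i) (c i) else 0.
have dk0 : d k = 0 by rewrite /d (negPf kE).
have da i : 0 <= d i <= a i by rewrite /d; case: ifP; rewrite ?le_min ?ge_min ?lexx ?a0 ?c0.
have dc i : 0 <= d i <= c i.
  by rewrite /d; case: ifP; rewrite ?le_min ?ge_min ?lexx ?a0 ?c0 ?orbT.
exists (fun i => a i - d i + (i == k)%:R * \sum_j d j).
exists (fun i => c i - d i + (i == k)%:R * \sum_j d j).
split; [exact: prob_on_transfer|exact: prob_on_transfer|by move=> t; rewrite pac; ring|].
move=> i iE; have /negPf -> : i != k by apply: contraNneq kE => <-.
rewrite /d iE mul0r !addr0.
by case: leP; rewrite subrr; [left|right].
Qed.

Lemma halfspaceE s i p : halfspace s i p <->
  (forces_nonpos s -> p i <= 0) /\ (forces_nonneg s -> 0 <= p i).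
Proof.
case: s => /=; split=> [h|[le0 ge0]]; do ?split=> // _; rewrite ?h ?lexx //.
- exact: ge0.
- exact: le0.
- by apply/eqP; rewrite eq_le le0 ?ge0.
Qed.

Lemma dsimplex_cut A C I (s : 'I_n -> hside) :
  (A :&: C = set0 \/ exists2 k, k \in A :&: C & k \notin I) ->
  (fun p => dsimplex A C p /\ forall i, i \in I -> halfspace (s i) i p)
  = dsimplex (A :\: [set i in I | forces_nonpos (s i)])
             (C :\: [set i in I | forces_nonneg (s i)]).
Proof.
move=> hAC; apply/boolp.predeqP => p; split=> [[/(dsimplex_separated hAC)]|].
  case=> a [c [[a0 aA a1] [c0 cC c1] pac ac0]] p_sign.
  have a_out i : i \in I -> forces_nonpos (s i) -> a i = 0.
    move=> iI s_le; have [/(_ s_le) + _] := (halfspaceE (s i) i p).1 (p_sign i iI).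
    rewrite pac; case: (ac0 i iI) => // ->; rewrite subr0 => ai_le0.
    by apply/eqP; rewrite eq_le ai_le0 a0.
  have c_out i : i \in I -> forces_nonneg (s i) -> c i = 0.
    move=> iI s_ge; have [_ /(_ s_ge)] := (halfspaceE (s i) i p).1 (p_sign i iI).
    rewrite pac; case: (ac0 i iI) => // ->; rewrite sub0r oppr_ge0 => ci_le0.
    by apply/eqP; rewrite eq_le ci_le0 c0.
  exists a, c; split=> //; split=> // i; rewrite !inE negb_and negbK.
    by case/orP=> [/andP[]|]; [exact: a_out|exact: aA].
  by case/orP=> [/andP[]|]; [exact: c_out|exact: cC].
case=> a [c [aA cC pac]]; split.
  exists a, c; split=> //; first exact: prob_on_sub (subsetDl _ _) aA.
  exact: prob_on_sub (subsetDl _ _) cC.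
move=> i iI; apply/halfspaceE; rewrite pac; split=> [s_le|s_ge].
  have [c0 _ _] := cC; case: aA => _ -> //; first by rewrite sub0r oppr_le0.
  by rewrite !inE iI s_le.
have [a0 _ _] := aA; case: cC => _ -> //; first by rewrite subr0.
by rewrite !inE iI s_ge.
Qed.

End DifferenceOfSimplices.

Lemma exists_strict_lower_bound (R : realDomainType) (T : finType) (f : T -> R) :
  exists g, forall i, g < f i.
Proof.
exists (- \sum_i `|f i| - 1) => i; rewrite (bigD1 i) //= opprD.
have : 0 <= \sum_(j | j != i) `|f j| by apply: sumr_ge0.
have : - f i <= `|f i| by rewrite -normrN ler_norm.
lra.
Qed.

Section ArgminPairs.
Variables (R : realFieldType) (T : finType) (Smu Snu : {set T}) (alpha beta : T -> R).
Implicit Types (A C : {set T}) (x : T -> R).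

Definition tie_set := argmin_in (Smu :&: Snu) (fun i => alpha i + beta i).

Lemma argmin_pair_meet x :
  let A := argmin_in Smu (fun i => alpha i - x i) in
  let C := argmin_in Snu (fun i => beta i + x i) in
  A :&: C = set0 \/ A :&: C = tie_set.
Proof.
move=> A C; have [->|[k /setIP[kA kC]]] := set_0Vmem (A :&: C); [by left|right].
have /argmin_inP[kS kA_min] := kA; have /argmin_inP[kV kC_min] := kC.
apply/esym/(argmin_in_eq (m := alpha k + beta k)).
- by exists k; rewrite inE kA kC.
- by apply: setISS; exact: argmin_in_sub.
- move=> i /setIP[/argmin_inP[iS iA_min] /argmin_inP[iV iC_min]].
  have := iA_min k kS; have := kA_min i iS; have := iC_min k kV; have := kC_min i iV; lra.
- move=> i /setIP[iS iV]; rewrite inE negb_and => /orP[iA|iC].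
    have : alpha k - x k < alpha i - x i.
      by rewrite ltNge; apply: contra iA; exact: argmin_in_le kA iS.
    have := kC_min i iV; lra.
  have : beta k + x k < beta i + x i.
    by rewrite ltNge; apply: contra iC; exact: argmin_in_le kC iV.
  have := kA_min i iS; lra.
Qed.

Lemma argmin_pair_at_level A C g :
  A \subset Smu -> C \subset Snu -> (exists a, a \in A) -> (exists c, c \in C) ->
  (forall i, i \in Smu :&: Snu -> g <= alpha i + beta i) ->
  A :&: C = [set i in Smu :&: Snu | alpha i + beta i == g] ->
  exists x, argmin_in Smu (fun i => alpha i - x i) = A /\
            argmin_in Snu (fun i => beta i + x i) = C.
Proof.
move=> AS CV Ane Cne g_le AC_level.
have gap i : i \in Smu -> i \in Snu -> i \notin A \/ i \notin C -> g < alpha i + beta i.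
  move=> iS iV nAC; rewrite lt_neqAle g_le ?inE ?iS ?iV // andbT eq_sym.
  apply/eqP => wg; have : i \in A :&: C by rewrite AC_level !inE iS iV wg eqxx.
  by rewrite inE; case: nAC => /negPf ->; rewrite ?andbF.
pose x i := if i \in A then alpha i else if i \in C then g - beta i
  else if i \in Snu then (if i \in Smu then (alpha i + g - beta i) / 2 else g - beta i + 1)
  else alpha i - 1.
have slack_mu i : i \in Smu -> i \notin A -> 0 < alpha i - x i.
  move=> iS iA; rewrite /x (negPf iA); case: ifP => [iC|/negbT iC].
    by have := gap i iS (subsetP CV i iC) (or_introl iA); lra.
  case: ifP => [iV|_]; last lra.
  by rewrite iS; have := gap i iS iV (or_introl iA); lra.
have slack_nu i : i \in Snu -> i \notin C -> g < beta i + x i.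
  move=> iV iC; rewrite /x (negPf iC) iV; case: ifP => [iA|/negbT iA].
    by have := gap i (subsetP AS i iA) iV (or_intror iC); lra.
  case: ifP => [iS|_]; last lra.
  by have := gap i iS iV (or_introl iA); lra.
have tight_nu i : i \in C -> beta i + x i = g.
  move=> iC; rewrite /x; case: ifP => [iA|_]; last by rewrite iC; lra.
  have : i \in A :&: C by rewrite inE iA iC.
  by rewrite AC_level inE => /andP[_ /eqP]; lra.
have tight_mu i : i \in A -> alpha i - x i = 0 by move=> iA; rewrite /x iA subrr.
exists x; split; first exact: argmin_in_eq Ane AS tight_mu slack_mu.
exact: argmin_in_eq Cne CV tight_nu slack_nu.
Qed.

Lemma argmin_pair_realize A C :
  A \subset Smu -> C \subset Snu -> (exists a, a \in A) -> (exists c, c \in C) ->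
  A :&: C = set0 \/ A :&: C = tie_set ->
  exists x, argmin_in Smu (fun i => alpha i - x i) = A /\
            argmin_in Snu (fun i => beta i + x i) = C.
Proof.
move=> AS CV Ane Cne AC.
suff [g g_le AC_level] : exists2 g, (forall i, i \in Smu :&: Snu -> g <= alpha i + beta i)
    & A :&: C = [set i in Smu :&: Snu | alpha i + beta i == g].
  exact: argmin_pair_at_level g_le AC_level.
have [AC0|[k kAC]] := set_0Vmem (A :&: C).
  have [g g_lt] := exists_strict_lower_bound (fun i => alpha i + beta i).
  exists g => [i _|]; first exact/ltW.
  by apply/setP => i; rewrite AC0 !inE gt_eqF ?andbF.
have {}AC : A :&: C = tie_set by case: AC => // AC0; rewrite AC0 inE in kAC.
have kW : k \in tie_set by rewrite -AC.
have /argmin_inP[_ kmin] := kW.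
by exists (alpha k + beta k) => //; rewrite AC /tie_set (argmin_in_level kW).
Qed.

End ArgminPairs.

Lemma is_argmin_omap (R : realDomainType) (T : finType) (o : T -> option R) (f : T -> R) i :
  (exists i0, o i0 != None) ->
  is_argmin (fun _ => True) (fun k => omap (fun u => u + f k) (o k)) i <->
  i \in argmin_in [set k | o k != None] (fun k => odflt 0 (o k) + f k).
Proof.
case=> i0 oi0; split=> [[_ imin]|/argmin_inP[]].
  have oi : o i != None by move: (imin i0 I) oi0; case: (o i); case: (o i0).
  apply/argmin_inP; split=> [|k]; rewrite ?inE //; move: (imin k I) oi.
  by case: (o i) => [u|]; case: (o k).
rewrite inE => oi imin; split=> // k _; move: (imin k); rewrite inE.
by case: (o i) oi => // u _; case: (o k) => //= v /(_ isT).
Qed.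

Lemma setC1_of_card n (B : {set 'I_n}) :
  (0 < n)%N -> #|B| = n.-1 -> exists j, B = ~:[set j].
Proof.
move=> n_gt0 cardB; have /cards1P[j Bj] : #|~: B| == 1%N.
  by rewrite cardsCs setCK card_ord cardB -subn1 subKn.
by exists j; rewrite -Bj setCK.
Qed.

Lemma card_setC1 n (j : 'I_n) : #|~:[set j]| = n.-1.
Proof. by rewrite cardsC1 card_ord. Qed.

Lemma is_argmin_setC1 (R : numDomainType) n (g : {set 'I_n} -> option R) (j : 'I_n) :
  (0 < n)%N ->
  is_argmin (fun B : {set 'I_n} => #|B| = n.-1) g (~:[set j]) <->
  is_argmin (fun _ => True) (fun k => g (~:[set k])) j.
Proof.
move=> n_gt0; split=> -[_ jmin]; split=> //.
- by move=> k _; apply/jmin/card_setC1.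
- exact: card_setC1.
- by move=> B /(setC1_of_card n_gt0)[k ->]; apply: jmin.
Qed.

Section ValuatedSupports.
Variables (R : realType) (n : nat).
Variables (mu : 'I_n -> option R) (nu : {set 'I_n} -> option R).

Definition mu_supp := [set i | mu i != None].
Definition nu_supp := [set j | nu (~:[set j]) != None].
Definition mu_val i := odflt 0 (mu i).
Definition nu_val j := odflt 0 (nu (~:[set j])).

Lemma dotv_setC1 (x : 'I_n -> R) j : dotv x (setv R (~:[set j])) = \sum_t x t - x j.
Proof.
rewrite /dotv; under eq_bigr do rewrite setv_setC1 mulrBr mulr1 mulrC.
by rewrite sumrB sum_delta.
Qed.

Lemma cell_dsimplex x : (exists i, i \in mu_supp) -> (exists j, j \in nu_supp) ->
  cell mu nu x = dsimplex (argmin_in mu_supp (fun i => mu_val i - x i))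
                          (argmin_in nu_supp (fun j => nu_val j + x j)).
Proof.
move=> mu_ne nu_ne; have [j0 _] := nu_ne.
have n_gt0 : (0 < n)%N := leq_ltn_trans (leq0n j0) (ltn_ord j0).
have nu_shift : (fun k => omap (fun u => u - dotv x (setv R (~:[set k]))) (nu (~:[set k])))
    = (fun k => omap (fun u => u + (x k - \sum_t x t)) (nu (~:[set k]))).
  by apply: boolp.funext => k; rewrite dotv_setC1 opprB addrC.
apply: shift_msum_conv.
- by move=> i; apply: is_argmin_omap; case: mu_ne => i0; rewrite inE; exists i0.
- by move=> B [cardB _]; apply: setC1_of_card.
- move=> j; rewrite is_argmin_setC1 // nu_shift is_argmin_omap; last first.
    by case: nu_ne => j1; rewrite inE; exists j1.
  suff -> : (fun k => odflt 0 (nu (~:[set k])) + (x k - \sum_t x t))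
      = (fun k => nu_val k + x k + - \sum_t x t) by rewrite argmin_in_addr.
  by apply: boolp.funext => k; rewrite addrA.
Qed.

Lemma flag_polytope_dsimplex M N : valuated_flag M N mu nu -> has_rank N n.-1 ->
  (0 < n)%N -> @flag_polytope R n M N = dsimplex mu_supp nu_supp.
Proof.
case=> mu_fin nu_fin _ N_rank n_gt0; apply: shift_msum_conv.
- by move=> i; rewrite inE; split=> [/mu_fin/eqP|/eqP/mu_fin].
- by move=> B /N_rank; apply: setC1_of_card.
- move=> j; have nu_fin_j := nu_fin _ (card_setC1 j).
  by rewrite inE; split=> [/nu_fin_j/eqP|/eqP/nu_fin_j].
Qed.

End ValuatedSupports.

Lemma argmin_face_meet (R : realDomainType) (T : finType) (S V : {set T}) (w : T -> R) :
  let A := argmin_in S (fun i => - w i) in let C := argmin_in V w in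
  A :&: C = set0 \/ A :&: C = S :&: V.
Proof.
move=> A C; have [->|[k /setIP[kA kC]]] := set_0Vmem (A :&: C); [by left|right].
have /argmin_inP[_ kA_min] := kA; have /argmin_inP[_ kC_min] := kC.
apply/eqP; rewrite eqEsubset setISS ?argmin_in_sub //=.
apply/subsetP => u /setIP[uS uV]; rewrite inE.
rewrite (argmin_in_le kA uS) ?(argmin_in_le kC uV) //.
  by rewrite -lerN2 kA_min.
by rewrite lerN2 kC_min.
Qed.

Definition sign_pattern (T : finType) (A C : {set T}) i : hside :=
  if i \in A then Hge else if i \in C then Hle else Heq.

Lemma sign_pattern_cut (T : finType) (I A C A' C' : {set T}) :
  A \subset A' -> C \subset C' -> A' :\: A \subset I -> C' :\: C \subset I ->
  {in A :&: C, forall i, i \notin I} ->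
  A' :\: [set i in I | forces_nonpos (sign_pattern A C i)] = A /\
  C' :\: [set i in I | forces_nonneg (sign_pattern A C i)] = C.
Proof.
move=> /subsetP AA' /subsetP CC' /subsetP A'I /subsetP C'I ACI.
have outside_in B B' i : (forall i, i \in B' :\: B -> i \in I) -> i \notin B ->
    (i \notin I) && (i \in B') = false.
  move=> B'I iB; apply: negbTE; rewrite negb_and negbK orbC.
  by case: (boolP (i \in B')) => //= iB'; apply: B'I; rewrite inE iB iB'.
split; apply/setP => i; rewrite !inE /sign_pattern.
  case: (boolP (i \in A)) => [/AA' -> | iA]; first by rewrite andbF.
  by case: (i \in C); rewrite /= andbT (outside_in A A').
case: (boolP (i \in C)) => [iC | iC]; last first.
  by case: (i \in A); rewrite /= andbT (outside_in C C').
rewrite CC' // andbT; case: (boolP (i \in A)) => iA /=; last by rewrite andbF.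
by rewrite andbT; apply: ACI; rewrite inE iA iC.
Qed.

Section CoordinateCuts.
Variables (R : realType) (n : nat).
Implicit Types (A C S V : {set 'I_n}).

Lemma dsimplex_face_of S V A C : A \subset S -> C \subset V ->
  (exists a, a \in A) -> (exists c, c \in C) ->
  A :&: C = set0 \/ S :&: V \subset A :&: C ->
  face (dsimplex S V) (dsimplex A C : pset R n).
Proof.
move=> AS CV [a aA] [c cC] AC.
have S_ne : exists a, a \in S by exists a; apply: (subsetP AS).
have V_ne : exists c, c \in V by exists c; apply: (subsetP CV).
suff [w [wS wV]] : exists w : 'I_n -> R,
    argmin_in S (fun i => - w i) = A /\ argmin_in V w = C.
  by exists w; rewrite dsimplex_face // wS wV.
case: AC => [AC0|SV_AC].
  have AC_disj i : i \in A -> i \notin C.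
    move=> iA; apply/negP => iC; have : i \in A :&: C by rewrite inE iA iC.
    by rewrite AC0 inE.
  exists (fun i => (i \in A)%:R - (i \in C)%:R); split.
    apply: (argmin_in_eq (m := -1)) => [|//|i iA|i iS iA]; first by exists a.
      by rewrite iA (negPf (AC_disj i iA)) subr0.
    by rewrite (negPf iA) sub0r opprK; have := ler0n R (i \in C); lra.
  apply: (argmin_in_eq (m := -1)) => [|//|i iC|i iV iC]; first by exists c.
    by rewrite iC (negPf (contraL (AC_disj i) iC)) sub0r.
  by rewrite (negPf iC) subr0; have := ler0n R (i \in A); lra.
have SV_AC' i : i \in S -> i \in V -> (i \in A) && (i \in C).
  by move=> iS iV; rewrite -in_setI; apply: (subsetP SV_AC); rewrite inE iS iV.
have VC_out i : i \in S -> (i \in V :\: C) = false.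
  move=> iS; rewrite inE; case: (boolP (i \in V)) => iV; rewrite ?andbF ?andbT //.
  by case/andP: (SV_AC' i iS iV) => _ ->.
have SA_out i : i \in V -> (i \in S :\: A) = false.
  move=> iV; rewrite inE; case: (boolP (i \in S)) => iS; rewrite ?andbF ?andbT //.
  by case/andP: (SV_AC' i iS iV) => ->.
exists (fun i => (i \in V :\: C)%:R - (i \in S :\: A)%:R); split.
  apply: (argmin_in_eq (m := 0)) => [|//|i iA|i iS iA]; first by exists a.
    by rewrite VC_out ?(subsetP AS) // inE iA /= subrr oppr0.
  by rewrite VC_out // inE iA iS /=; lra.
apply: (argmin_in_eq (m := 0)) => [|//|i iC|i iV iC]; first by exists c.
  by rewrite SA_out ?(subsetP CV) // inE iC /= subrr.
by rewrite SA_out // inE iC iV /=; lra.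
Qed.

Section ArgminPairCells.
Variables (Smu Snu : {set 'I_n}) (alpha beta : 'I_n -> R).
Hypotheses (Smu_ne : exists i, i \in Smu) (Snu_ne : exists j, j \in Snu).

Definition hyperplane_set := (Smu :&: Snu) :\: tie_set Smu Snu alpha beta.

Lemma cut_condition A C : A \subset Smu -> C \subset Snu ->
  A :&: C = set0 \/ Smu :&: Snu \subset A :&: C ->
  A :&: C = set0 \/ exists2 k, k \in A :&: C & k \notin hyperplane_set.
Proof.
move=> AS CV [AC0|UAC]; [by left|].
have [U0|[k0 k0U]] := set_0Vmem (Smu :&: Snu).
  by left; apply/eqP; rewrite -subset0 -U0 setISS.
have [k kW] := argmin_in_nonempty (fun i => alpha i + beta i) (ex_intro _ k0 k0U).
right; exists k; first exact: (subsetP UAC) _ (subsetP (argmin_in_sub _ _) _ kW).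
by rewrite inE kW.
Qed.

Lemma cut_face_of_pair A C A' C' :
  A \subset A' -> C \subset C' -> A' \subset Smu -> C' \subset Snu ->
  (exists a, a \in A) -> (exists c, c \in C) ->
  A' :&: C' = set0 \/ Smu :&: Snu \subset A' :&: C' ->
  A' :\: A \subset hyperplane_set -> C' :\: C \subset hyperplane_set ->
  {in A :&: C, forall i, i \notin hyperplane_set} ->
  face (dsimplex Smu Snu) (dsimplex A' C' : pset R n) /\
  dsimplex A C = (fun p : 'I_n -> R => dsimplex A' C' p /\
    forall i, i \in hyperplane_set -> halfspace (sign_pattern A C i) i p).
Proof.
move=> AA' CC' A'S C'V [a aA] [c cC] meet A'I C'I ACI; split.
  apply: dsimplex_face_of => //; first by exists a; apply: (subsetP AA').
  by exists c; apply: (subsetP CC').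
rewrite dsimplex_cut; last exact: cut_condition.
by have [-> ->] := sign_pattern_cut AA' CC' A'I C'I ACI.
Qed.

Lemma cell_cut_face x :
  exists F, face (dsimplex Smu Snu) F /\ exists s : 'I_n -> hside,
    dsimplex (argmin_in Smu (fun i => alpha i - x i))
             (argmin_in Snu (fun j => beta j + x j))
    = (fun p : 'I_n -> R => F p /\ forall i, i \in hyperplane_set -> halfspace (s i) i p).
Proof.
set A := argmin_in Smu _; set C := argmin_in Snu _.
have [AS CV] : A \subset Smu /\ C \subset Snu by split; apply: argmin_in_sub.
have A_ne := argmin_in_nonempty (fun i => alpha i - x i) Smu_ne.
have C_ne := argmin_in_nonempty (fun j => beta j + x j) Snu_ne.
have [AC0|ACW] := argmin_pair_meet Smu Snu alpha beta x.
  have diff0 (B : {set 'I_n}) : B :\: B \subset hyperplane_set by rewrite setDv sub0set.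
  have ACI : {in A :&: C, forall i, i \notin hyperplane_set}.
    by rewrite AC0 => i; rewrite inE.
  have [AC_face AC_cut] := cut_face_of_pair (subxx A) (subxx C) AS CV A_ne C_ne
    (or_introl AC0) (diff0 A) (diff0 C) ACI.
  by exists (dsimplex A C); split=> //; exists (sign_pattern A C).
have ACI : {in A :&: C, forall i, i \notin hyperplane_set}.
  by rewrite ACW => i iW; rewrite inE iW.
have diffU (B : {set 'I_n}) : tie_set Smu Snu alpha beta \subset B ->
    (B :|: Smu :&: Snu) :\: B \subset hyperplane_set.
  by move=> WB; rewrite setDUl setDv set0U setDS.
have AU_S : A :|: Smu :&: Snu \subset Smu by rewrite subUset AS subsetIl.
have CU_V : C :|: Smu :&: Snu \subset Snu by rewrite subUset CV subsetIr.
have U_sub : Smu :&: Snu \subset (A :|: Smu :&: Snu) :&: (C :|: Smu :&: Snu).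
  by rewrite subsetI !subsetUr.
have [WA WC] : tie_set Smu Snu alpha beta \subset A /\ tie_set Smu Snu alpha beta \subset C.
  by rewrite -ACW subsetIl subsetIr.
have [AC_face AC_cut] := cut_face_of_pair (subsetUl A _) (subsetUl C _) AU_S CU_V
  A_ne C_ne (or_intror U_sub) (diffU _ WA) (diffU _ WC) ACI.
by eexists; split; first exact: AC_face; exists (sign_pattern A C).
Qed.

Lemma face_cut_cell (F : pset R n) (s : 'I_n -> hside) :
  face (dsimplex Smu Snu) F ->
  (exists p, F p /\ forall i, i \in hyperplane_set -> halfspace (s i) i p) ->
  exists x, (fun p => F p /\ forall i, i \in hyperplane_set -> halfspace (s i) i p)
    = dsimplex (argmin_in Smu (fun i => alpha i - x i))
               (argmin_in Snu (fun j => beta j + x j)).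
Proof.
case=> w; rewrite dsimplex_face // => ->.
set A := argmin_in Smu _; set C := argmin_in Snu _.
have [AS CV] : A \subset Smu /\ C \subset Snu by split; apply: argmin_in_sub.
have meet := argmin_face_meet Smu Snu w.
rewrite dsimplex_cut; last first.
  by apply: cut_condition => //; case: meet => ->; [left|right].
set E1 := [set i in _ | _]; set E2 := [set i in _ | _].
move=> [p /dsimplex_nonempty [A_ne C_ne]].
suff [x [xA xC]] : exists x, argmin_in Smu (fun i => alpha i - x i) = A :\: E1 /\
    argmin_in Snu (fun j => beta j + x j) = C :\: E2.
  by exists x; rewrite xA xC.
apply: argmin_pair_realize => //.
- exact: subset_trans (subsetDl _ _) AS.
- exact: subset_trans (subsetDl _ _) CV.
have -> : (A :\: E1) :&: (C :\: E2) = (A :&: C) :\: hyperplane_set.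
  rewrite setIDAC setIDA setDDl; congr (_ :\: _); apply/setP => i; rewrite !inE.
  by case: (s i); rewrite /= ?andbT ?andbF ?orbF ?orbb.
case: meet => ->; first by left; rewrite set0D.
by right; rewrite setDDr setDv set0U; apply/setIidPr/argmin_in_sub.
Qed.

End ArgminPairCells.

End CoordinateCuts.

Theorem proposition5p1 (R : realType) (n : nat) (M N : {set {set 'I_n}})
    (mu : 'I_n -> option R) (nu : {set 'I_n} -> option R) :
  flag_matroid M N -> has_rank M 1 -> has_rank N n.-1 ->
  valuated_flag M N mu nu ->
  exists I : {set 'I_n}, forall X : pset R n,
    (exists x : 'I_n -> R, X = cell mu nu x) <->
    ((exists p, X p) /\
     exists F, face (flag_polytope M N) F /\
     exists s : 'I_n -> hside,
       X = fun p => F p /\ forall i, i \in I -> halfspace (s i) i p).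
Proof.
move=> [[/set0Pn [B BM] _] [/set0Pn [B' B'N] _] _] M_rank N_rank val.
have [mu_fin nu_fin _] := val.
have mu_ne : exists i, i \in mu_supp mu.
  have /cards1P [i Bi] : #|B| == 1%N by rewrite M_rank.
  by exists i; rewrite inE; apply/eqP/mu_fin; rewrite -Bi.
have [i0 _] := mu_ne; have n_gt0 : (0 < n)%N := leq_ltn_trans (leq0n i0) (ltn_ord i0).
have nu_ne : exists j, j \in nu_supp nu.
  have [j B'j] := setC1_of_card n_gt0 (N_rank B' B'N).
  by exists j; rewrite inE; apply/eqP/(nu_fin _ (card_setC1 j)); rewrite -B'j.
rewrite (flag_polytope_dsimplex val N_rank n_gt0).
exists (hyperplane_set (mu_supp mu) (nu_supp nu) (mu_val mu) (nu_val nu)) => X; split.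
  case=> x ->; rewrite cell_dsimplex //; split; last exact: cell_cut_face.
  have [i iA] := argmin_in_nonempty (fun i => mu_val mu i - x i) mu_ne.
  have [j jC] := argmin_in_nonempty (fun j => nu_val nu j + x j) nu_ne.
  by exists (fun t => (t == i)%:R - (t == j)%:R); exact: dsimplex_delta.
case=> [[p Xp] [F [F_face [s X_cut]]]]; rewrite X_cut in Xp *.
have [x ->] := face_cut_cell mu_ne nu_ne F_face (ex_intro _ p Xp).
by exists x; rewrite cell_dsimplex.
Qed.
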